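(* Every Abel sequentially compact subset of $\mathbb{R}$ is ward compact.
   Context: A sequence $(p_n)_{n\ge0}$ is Abel convergent to $\ell$ if $\sum_{k=0}^{\infty}p_k x^k$ converges for every $0\le x<1$ and $\lim_{x\to 1^-}(1-x)\sum_{k=0}^{\infty}p_k x^k=\ell$. A subset $F\subseteq\mathbb{R}$ is Abel sequentially compact if every sequence of points of $F$ has a subsequence Abel convergent to a limit belonging to $F$. A sequence $(p_n)$ is quasi-Cauchy if $\lim_{n\to\infty}(p_{n+1}-p_n)=0$. A subset $E\subseteq\mathbb{R}$ is ward compact if every sequence of points of $E$ has a quasi-Cauchy subsequence. *)

From Stdlib Require Import Reals.
From Coquelicot Require Import Coquelicot.
Open Scope R_scope.

Definition abel_convergent (p : nat -> R) (l : R) : Prop :=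
  (forall x : R, 0 <= x < 1 -> ex_series (fun k => p k * x ^ k)) /\
  filterlim (fun x => (1 - x) * Series (fun k => p k * x ^ k))
            (at_left 1) (locally l).

Definition subseq_index (phi : nat -> nat) : Prop :=
  forall n : nat, (phi n < phi (S n))%nat.

Definition abel_seq_compact (F : R -> Prop) : Prop :=
  forall p : nat -> R, (forall n, F (p n)) ->
    exists phi : nat -> nat, subseq_index phi /\
      exists l : R, F l /\ abel_convergent (fun n => p (phi n)) l.

Definition quasi_cauchy (p : nat -> R) : Prop :=
  is_lim_seq (fun n => p (S n) - p n) 0.

Definition ward_compact (E : R -> Prop) : Prop :=
  forall p : nat -> R, (forall n, E (p n)) ->
    exists phi : nat -> nat, subseq_index phi /\ quasi_cauchy (fun n => p (phi n)).

(** An Abel sequentially compact set is bounded: a sequence escaping faster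
    than [2^n] has no subsequence whose power series converges at [x = 1/2].
    By Bolzano-Weierstrass every sequence in the set then has a convergent
    subsequence, and convergent sequences are quasi-Cauchy. *)

From Stdlib Require Import Reals.
From Coquelicot Require Import Coquelicot.
From Stdlib Require Import Lra Lia Classical ClassicalEpsilon.
Open Scope R_scope.

Lemma subseq_index_ge (phi : nat -> nat) :
  subseq_index phi -> forall n, (n <= phi n)%nat.
Proof. intros Hphi n; induction n; [lia|]. specialize (Hphi n); lia. Qed.

Lemma subseq_index_of_frequently (P : nat -> nat -> Prop) :
  (forall N k, exists m, (N <= m)%nat /\ P k m) ->
  exists phi, subseq_index phi /\ forall n, P n (phi n).
Proof.
  intros HP.
  destruct (choice (fun Nk m => (fst Nk <= m)%nat /\ P (snd Nk) m)
                   (fun Nk => HP (fst Nk) (snd Nk))) as [g Hg].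
  set (phi := fix phi n :=
         match n with O => g (O, O) | S n => g (S (phi n), S n) end).
  exists phi; split.
  - intros n. exact (proj1 (Hg (S (phi n), S n))).
  - intros [|n]; [exact (proj2 (Hg (O, O))) | exact (proj2 (Hg (S (phi n), S n)))].
Qed.

Lemma is_lim_seq_geom_half_bound (u : nat -> R) (l : R) :
  (forall n, Rabs (u n - l) < (/ 2) ^ n) -> is_lim_seq u l.
Proof.
  intros Hu.
  assert (Hgeom : is_lim_seq (fun n => (/ 2) ^ n) 0)
    by (apply is_lim_seq_geom; rewrite Rabs_pos_eq; lra).
  apply is_lim_seq_le_le with (u := fun n => l - (/ 2) ^ n)
                              (w := fun n => l + (/ 2) ^ n).
  - intros n. specialize (Hu n). apply Rabs_def2 in Hu. lra.
  - replace (Finite l) with (Finite (l - 0)) by (f_equal; ring).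
    exact (is_lim_seq_minus' _ _ _ _ (is_lim_seq_const l) Hgeom).
  - replace (Finite l) with (Finite (l + 0)) by (f_equal; ring).
    exact (is_lim_seq_plus' _ _ _ _ (is_lim_seq_const l) Hgeom).
Qed.

Lemma cluster_point_subseq (u : nat -> R) (l : R) :
  ValAdh u l ->
  exists phi, subseq_index phi /\ is_lim_seq (fun n => u (phi n)) l.
Proof.
  intros Hl.
  assert (Hfreq : forall N k, exists m, (N <= m)%nat /\ Rabs (u m - l) < (/ 2) ^ k).
  { intros N k.
    assert (Hpos : 0 < (/ 2) ^ k) by (apply pow_lt; lra).
    apply (Hl (fun y => Rabs (y - l) < (/ 2) ^ k) N).
    exists (mkposreal _ Hpos). intros y Hy. exact Hy. }
  destruct (subseq_index_of_frequently _ Hfreq) as [phi [Hphi Hclose]].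
  exists phi. split; [exact Hphi|].
  now apply is_lim_seq_geom_half_bound.
Qed.

Lemma is_lim_seq_quasi_cauchy (u : nat -> R) (l : R) :
  is_lim_seq u l -> quasi_cauchy u.
Proof.
  intros Hu. unfold quasi_cauchy.
  replace (Finite 0) with (Finite (l - l)) by (f_equal; ring).
  exact (is_lim_seq_minus' _ _ _ _ (proj1 (is_lim_seq_incr_1 u l) Hu) Hu).
Qed.

Lemma abel_convergent_eventually_lt_pow2 (q : nat -> R) (l : R) :
  abel_convergent q l -> exists N, forall n, (N <= n)%nat -> Rabs (q n) < 2 ^ n.
Proof.
  intros [Hser _].
  assert (Hterms := ex_series_lim_0 _ (Hser (/ 2) ltac:(lra))).
  apply is_lim_seq_spec in Hterms.
  destruct (Hterms (mkposreal 1 Rlt_0_1)) as [N HN].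
  exists N. intros n Hn. specialize (HN n Hn). simpl in HN.
  rewrite Rminus_0_r, Rabs_mult, <- RPow_abs, (Rabs_pos_eq (/ 2)) in HN by lra.
  assert (Hinv : (/ 2) ^ n = / 2 ^ n) by apply pow_inv.
  assert (Hpos : 0 < 2 ^ n) by (apply pow_lt; lra).
  rewrite Hinv in HN.
  apply (Rmult_lt_compat_r (2 ^ n)) in HN; [|exact Hpos].
  rewrite Rmult_assoc, Rinv_l, Rmult_1_r, Rmult_1_l in HN by lra.
  exact HN.
Qed.

Lemma abel_seq_compact_bounded (F : R -> Prop) :
  abel_seq_compact F -> exists M, forall y, F y -> Rabs y <= M.
Proof.
  intros HF. apply NNPP; intros Hunbdd.
  assert (Hescape : forall n : nat, exists y, F y /\ 2 ^ n < Rabs y).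
  { intros n. apply NNPP; intros Hc. apply Hunbdd. exists (2 ^ n). intros y Fy.
    apply Rnot_lt_le. intros Hlt. apply Hc. now exists y. }
  destruct (choice _ Hescape) as [p Hp].
  destruct (HF p (fun n => proj1 (Hp n))) as [phi [Hphi [l [_ Habel]]]].
  destruct (abel_convergent_eventually_lt_pow2 _ _ Habel) as [N HN].
  assert (Hmono : 2 ^ N <= 2 ^ phi N)
    by (apply Rle_pow; [lra | apply subseq_index_ge; exact Hphi]).
  pose proof (HN N (le_n N)). pose proof (proj2 (Hp (phi N))). simpl in *.
  lra.
Qed.

Theorem corollary19 (F : R -> Prop) :
  abel_seq_compact F -> ward_compact F.
Proof.
  intros HF p Hp.
  destruct (abel_seq_compact_bounded F HF) as [M HM].
  assert (Hbox : forall n, (fun y => - M <= y <= M) (p n))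
    by (intros n; apply Rabs_le_between, HM, Hp).
  destruct (Bolzano_Weierstrass p _ (compact_P3 (- M) M) Hbox) as [l Hl].
  destruct (cluster_point_subseq p l Hl) as [phi [Hphi Hlim]].
  exists phi. split; [exact Hphi|].
  exact (is_lim_seq_quasi_cauchy _ _ Hlim).
Qed.
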